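(* Let $m\ge 3$, let $K\ne\Delta_{[m]}$ be a simplicial complex on $[m]$ with $\{m\}\in K$, and let $L=K\cap 2^{[m-1]}$, regarded as a simplicial complex on $[m-1]$, with $L\ne\Delta_{[m-1]}$. Then $K$ is the cone over $L$ with apex $m$ (i.e. $K=\{\sigma,\sigma\cup\{m\}:\sigma\in L\}$) if and only if $$\mathrm{Bier}(L)=\mathrm{Bier}(K)\cap 2^{[m-1]\sqcup[(m-1)']},$$ where $\mathrm{Bier}(L)$ is formed using the Alexander dual of $L$ on $[(m-1)']$.
   Context: A simplicial complex $K$ on $[m]=\{1,\dots,m\}$ is a nonempty family of subsets of $[m]$ closed under taking subsets. $\Delta_{[n]}=2^{[n]}$. Let $[n']=\{1',\dots,n'\}$ be a disjoint copy of $[n]$, $I'=\{i':i\in I\}$. For a complex $K\ne\Delta_{[n]}$ on $[n]$ the Alexander dual $K^\vee$ is the complex on $[n']$ with $J'\in K^\vee$ iff $[n]\setminus J\notin K$. The Bier sphere $\mathrm{Bier}(K)$ is the complex on $[n]\sqcup[n']$ with faces $I\sqcup J'$, $I\in K$, $J'\in K^\vee$, $I\cap J=\varnothing$. *)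

(* Vertices of [m] are the ordinals of 'I_m (vertex k+1 <-> ordinal k);
   the disjoint copy [m'] is realised via the sum type T + T: inl i = i, inr i = i'. *)
From mathcomp Require Import all_boot.
Set Implicit Arguments. Unset Strict Implicit. Unset Printing Implicit Defensive.

Section Complexes.
Variable T : finType.

Definition is_complex (V : {set T}) (K : {set {set T}}) : Prop :=
  K != set0 /\ (forall s : {set T}, s \in K -> s \subset V) /\
  (forall s t : {set T}, s \in K -> t \subset s -> t \in K).

Definition full_simplex (V : {set T}) : {set {set T}} := powerset V.

Definition alex_dual (V : {set T}) (K : {set {set T}}) : {set {set T}} :=
  [set J in powerset V | V :\: J \notin K].

Definition bier (V : {set T}) (K : {set {set T}}) : {set {set (T + T)}} :=
  [set (inl @: I) :|: (inr @: J) | I : {set T} in K, J : {set T} in alex_dual V K & [disjoint I & J]].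

Definition restrict2 (W : {set T}) (B : {set {set (T + T)}}) : {set {set (T + T)}} :=
  [set S in B | S \subset (inl @: W) :|: (inr @: W)].

Definition restrict (W : {set T}) (K : {set {set T}}) : {set {set T}} :=
  [set s in K | s \subset W].

Definition cone (a : T) (L : {set {set T}}) : {set {set T}} :=
  L :|: [set s :|: [set a] | s in L].

End Complexes.

From mathcomp Require Import all_boot.
Set Implicit Arguments. Unset Strict Implicit. Unset Printing Implicit Defensive.

(* Write W = [m-1] and a = m.  For I, J within W, the face I ⊔ J' lies in
   Bier(K) iff I ∈ K and [m] \ J = (W \ J) ∪ {a} ∉ K, and it lies in Bier(L)
   iff I ∈ K and W \ J ∉ K.  Since K is closed under subsets the first dual
   condition always implies the second; the converse for every J amounts to
   "σ ∈ K, σ ⊆ W implies σ ∪ {a} ∈ K" (take σ = W \ J), which is exactly the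
   statement that K is the cone over L with apex a. *)

Section BierFaces.
Variable T : finType.

Lemma inl_preimage_bier_face (I J : {set T}) :
  [set x | inl x \in (inl @: I :|: inr @: J : {set T + T})] = I.
Proof.
apply/setP => x; rewrite !inE (mem_imset _ _ (@inl_inj T T)).
by case: (x \in I) => //=; apply/imsetP => -[].
Qed.

Lemma inr_preimage_bier_face (I J : {set T}) :
  [set x | inr x \in (inl @: I :|: inr @: J : {set T + T})] = J.
Proof.
apply/setP => x; rewrite !inE (mem_imset _ _ (@inr_inj T T)) orbC.
by case: (x \in J) => //=; apply/imsetP => -[].
Qed.

Lemma bier_face_subset (I J W : {set T}) :
  ((inl @: I :|: inr @: J : {set T + T}) \subset inl @: W :|: inr @: W) =
  (I \subset W) && (J \subset W).
Proof.
apply/idP/andP => [sub_IJ | [sIW sJW]]; last by apply: setUSS; apply: imsetS.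
split; apply/subsetP => x Hx.
  rewrite -(inl_preimage_bier_face W W) inE; apply: (subsetP sub_IJ).
  by rewrite inE imset_f.
rewrite -(inr_preimage_bier_face W W) inE; apply: (subsetP sub_IJ).
by rewrite inE imset_f ?orbT.
Qed.

Lemma setDDK (W s : {set T}) : s \subset W -> W :\: (W :\: s) = s.
Proof. by move=> sW; rewrite setDDr setDv set0U; apply/setIidPr. Qed.

Lemma bierP (V : {set T}) (M : {set {set T}}) (S : {set T + T}) :
  S \in bier V M <->
  exists I J : {set T}, [/\ S = inl @: I :|: inr @: J, I \in M, J \in alex_dual V M
                & [disjoint I & J]].
Proof.
split => [/imset2P [I J HI] | [I [J [-> HI HJ dIJ]]]].
  by rewrite inE => /andP [HJ dIJ] ->; exists I, J.
by apply/imset2P; exists I J => //; rewrite inE HJ.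
Qed.

End BierFaces.

Section ConeBier.
Variables (T : finType) (a : T) (K : {set {set T}}).
Hypothesis K_neq0 : K != set0.
Hypothesis K_down : forall s t : {set T}, s \in K -> t \subset s -> t \in K.

Let W := [set i : T | i != a].
Let L := restrict W K.

Definition apex_closed := forall s, s \in K -> s \subset W -> s :|: [set a] \in K.

Lemma set0_in_complex : set0 \in K.
Proof. by case/set0Pn: K_neq0 => s Hs; apply: K_down Hs (sub0set _). Qed.

Lemma setTD_subW (J : {set T}) :
  J \subset W -> [set: T] :\: J = (W :\: J) :|: [set a].
Proof.
move=> sJW; apply/setP => x; rewrite !inE.
case: (x =P a) => [-> | _] /=; last by rewrite andbT orbF.
by rewrite orbT andbT; apply: contraTN isT => /(subsetP sJW); rewrite inE eqxx.
Qed.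

Lemma cone_iff_apex_closed : K = cone a L <-> apex_closed.
Proof.
split => [E s Ks sW | closed].
  by rewrite E !inE; apply/orP; right; apply: imset_f; rewrite inE Ks sW.
apply/setP => s; rewrite !inE; apply/idP/idP => [Ks | /orP [| /imsetP [t]]].
- have [as_ | nas] := boolP (a \in s).
    apply/orP; right; apply/imsetP; exists (s :\ a); last by rewrite setUC setD1K.
    rewrite inE (K_down Ks (subD1set _ _)) /=.
    by apply/subsetP => x; rewrite !inE => /andP [].
  rewrite Ks /=; apply/orP; left; apply/subsetP => x xs; rewrite inE.
  by apply: contraNneq nas => <-.
- by case/andP.
- by rewrite inE => /andP [Kt tW] ->; apply: closed.
Qed.

Lemma bier_restrict_subset : bier W L \subset restrict2 W (bier [set: T] K).
Proof.
apply/subsetP => S /bierP [I [J [-> LI dualJ dIJ]]].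
move: LI dualJ; rewrite !inE => /andP [KI IW] /andP [JW nKWJ].
rewrite bier_face_subset IW JW !andbT; apply/bierP; exists I, J; split => //.
rewrite !inE subsetT /=; apply: contra nKWJ => KVJ.
by rewrite subsetDl andbT (K_down KVJ) // setSD ?subsetT.
Qed.

Lemma restrict2_bier_subset :
  apex_closed -> restrict2 W (bier [set: T] K) \subset bier W L.
Proof.
move=> closed; apply/subsetP => S; rewrite inE => /andP [].
case/bierP => I [J [-> KI dualJ dIJ]]; rewrite bier_face_subset => /andP [IW JW].
apply/bierP; exists I, J; split => //; first by rewrite inE KI IW.
move: dualJ; rewrite !inE JW subsetT (setTD_subW JW) /=.
by apply: contra => /andP [KWJ _]; apply: closed KWJ (subsetDl _ _).
Qed.

Lemma apex_closed_of_restrict2_bier :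
  restrict2 W (bier [set: T] K) \subset bier W L -> apex_closed.
Proof.
move=> sub s Ks sW; apply/negPn/negP => nKsa.
pose J := W :\: s.
have JW : J \subset W by apply: subsetDl.
have : inl @: set0 :|: inr @: J \in restrict2 W (bier [set: T] K).
  rewrite inE bier_face_subset sub0set JW !andbT; apply/bierP.
  exists set0, J; split => //.
  - exact: set0_in_complex.
  - by rewrite !inE subsetT (setTD_subW JW) setDDK.
  - by rewrite -setI_eq0 set0I.
move/(subsetP sub)/bierP => [I' [J' [eqS _ dualJ' _]]].
have eqJ : J' = J by rewrite -(inr_preimage_bier_face I' J') -eqS inr_preimage_bier_face.
by move: dualJ'; rewrite eqJ !inE setDDK // Ks sW andbF.
Qed.

Lemma bier_restrict_iff_apex_closed :
  bier W L = restrict2 W (bier [set: T] K) <-> apex_closed.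
Proof.
split => [eqB | closed]; first by apply: apex_closed_of_restrict2_bier; rewrite eqB.
by apply/eqP; rewrite eqEsubset bier_restrict_subset restrict2_bier_subset.
Qed.

End ConeBier.

Theorem mainTheorem6 (n : nat) (K : {set {set 'I_n.+1}}) :
  2 <= n ->
  is_complex [set: 'I_n.+1] K ->
  K != full_simplex [set: 'I_n.+1] ->
  [set ord_max] \in K ->
  restrict [set i : 'I_n.+1 | i != ord_max] K
    != full_simplex [set i : 'I_n.+1 | i != ord_max] ->
  (K = cone ord_max (restrict [set i : 'I_n.+1 | i != ord_max] K) <->
   bier [set i : 'I_n.+1 | i != ord_max] (restrict [set i : 'I_n.+1 | i != ord_max] K)
   = restrict2 [set i : 'I_n.+1 | i != ord_max] (bier [set: 'I_n.+1] K)).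
Proof.
move=> _ [K_neq0 [_ K_down]] _ _ _.
apply: iff_trans (cone_iff_apex_closed ord_max K_down) _.
exact: iff_sym (bier_restrict_iff_apex_closed ord_max K_neq0 K_down).
Qed.
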